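(* Let $X$ be a real Banach space and $\varepsilon>0$. Let $C\subseteq X$ be closed, bounded, convex and non-$\varepsilon$-dentable, let $C'\subseteq C$ be closed and convex, and let $D\subseteq C$ satisfy $\alpha(D)<\varepsilon$. If $C=\overline{\operatorname{co}}(C'\cup D)$, then $C=C'$.
   Context: $\overline{\operatorname{co}}(E)$ denotes the norm-closed convex hull of $E$. For $A\subseteq X$, the Kuratowski measure of noncompactness $\alpha(A)$ is the infimum of all $\varepsilon>0$ such that $A$ can be covered by finitely many sets of diameter at most $\varepsilon$. For a bounded nonempty $A\subseteq X$, $f$ in the closed unit ball of $X^*$ and $\delta>0$, the slice $S(f,A,\delta)=\{a\in A: f(a)>\sup f(A)-\delta\}$; a slice of $A$ is any set of this form. A bounded set $A$ is non-$\varepsilon$-dentable if every slice of $A$ has diameter $>\varepsilon$. *)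

From Stdlib Require Import Reals List.
Open Scope R_scope.

Record NormedSpace := {
  car :> Type;
  vzero : car;
  vadd : car -> car -> car;
  vopp : car -> car;
  vscal : R -> car -> car;
  vnorm : car -> R;
  vadd_assoc : forall x y z, vadd x (vadd y z) = vadd (vadd x y) z;
  vadd_comm : forall x y, vadd x y = vadd y x;
  vadd_0l : forall x, vadd vzero x = x;
  vadd_oppl : forall x, vadd (vopp x) x = vzero;
  vscal_assoc : forall a b x, vscal a (vscal b x) = vscal (a * b) x;
  vscal_1 : forall x, vscal 1 x = x;
  vscal_distr_v : forall a x y, vscal a (vadd x y) = vadd (vscal a x) (vscal a y);
  vscal_distr_s : forall a b x, vscal (a + b) x = vadd (vscal a x) (vscal b x);
  vnorm_eq0 : forall x, vnorm x = 0 -> x = vzero;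
  vnorm_scal : forall a x, vnorm (vscal a x) = Rabs a * vnorm x;
  vnorm_triangle : forall x y, vnorm (vadd x y) <= vnorm x + vnorm y
}.

Arguments vzero {n}.
Arguments vadd {n}.
Arguments vopp {n}.
Arguments vscal {n}.
Arguments vnorm {n}.

Definition vdist {X : NormedSpace} (x y : X) : R := vnorm (vadd x (vopp y)).

Definition complete (X : NormedSpace) : Prop :=
  forall u : nat -> X,
    (forall e, 0 < e -> exists N, forall m n, (N <= m)%nat -> (N <= n)%nat ->
        vdist (u m) (u n) < e) ->
    exists l : X, forall e, 0 < e -> exists N, forall n, (N <= n)%nat ->
        vdist (u n) l < e.

Definition Banach (X : NormedSpace) : Prop := complete X.

Definition ns_subset {X : NormedSpace} (A B : X -> Prop) : Prop :=
  forall x, A x -> B x.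

Definition ns_bounded {X : NormedSpace} (A : X -> Prop) : Prop :=
  exists M, forall x, A x -> vnorm x <= M.

Definition ns_closed {X : NormedSpace} (A : X -> Prop) : Prop :=
  forall x, ~ A x -> exists r, 0 < r /\ forall y, vdist x y < r -> ~ A y.

Definition ns_convex {X : NormedSpace} (A : X -> Prop) : Prop :=
  forall x y t, A x -> A y -> 0 <= t <= 1 ->
    A (vadd (vscal t x) (vscal (1 - t) y)).

Definition closed_convex_hull {X : NormedSpace} (E : X -> Prop) : X -> Prop :=
  fun x => forall K : X -> Prop, ns_closed K -> ns_convex K -> ns_subset E K -> K x.

Definition ns_union {X : NormedSpace} (A B : X -> Prop) : X -> Prop :=
  fun x => A x \/ B x.

Definition diam_le {X : NormedSpace} (A : X -> Prop) (e : R) : Prop :=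
  forall x y, A x -> A y -> vdist x y <= e.

Definition diam_gt {X : NormedSpace} (A : X -> Prop) (e : R) : Prop :=
  exists x y, A x /\ A y /\ e < vdist x y.

Definition finite_cover_diam {X : NormedSpace} (A : X -> Prop) (e : R) : Prop :=
  exists l : list (X -> Prop),
    (forall S, In S l -> diam_le S e) /\
    (forall x, A x -> exists S, In S l /\ S x).

Definition is_glb (E : R -> Prop) (m : R) : Prop :=
  (forall x, E x -> m <= x) /\ (forall b, (forall x, E x -> b <= x) -> b <= m).

Definition is_kuratowski {X : NormedSpace} (A : X -> Prop) (a : R) : Prop :=
  is_glb (fun e => 0 < e /\ finite_cover_diam A e) a.

Definition dual_unit_ball {X : NormedSpace} (f : X -> R) : Prop :=
  (forall x y, f (vadd x y) = f x + f y) /\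
  (forall a x, f (vscal a x) = a * f x) /\
  (forall x, Rabs (f x) <= vnorm x).

Definition slice {X : NormedSpace} (f : X -> R) (A : X -> Prop) (delta : R) : X -> Prop :=
  fun a => A a /\ exists s, is_lub (fun r => exists b, A b /\ r = f b) s /\ s - delta < f a.

Definition non_dentable {X : NormedSpace} (A : X -> Prop) (e : R) : Prop :=
  ns_bounded A /\
  forall f delta, dual_unit_ball f -> 0 < delta -> diam_gt (slice f A delta) e.

(* Cover [D] by finitely many sets of diameter [e < eps] and absorb the pieces
   [K = clco (D /\ S)] one at a time: it suffices that [C = clco (A \/ K)],
   with [A] closed convex and [K] convex of diameter [e], forces [C = A].
   If [x0] is in [C] but not in [A], Hahn-Banach yields [f] of norm at most 1
   with [f <= f x0 - r] on [A]. For [c] large the set of [z] with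
   [dist (z, K) <= c (sup f(C) - f z)] is closed, convex and contains [A] and
   [K], so it contains [C]; hence every thin slice of [C] defined by [f] lies
   near [K] and has diameter less than [eps], contradicting
   non-[eps]-dentability. *)

From Stdlib Require Import Reals List Lra Lia Classical ClassicalEpsilon.
From mathcomp Require classical_sets.
Open Scope R_scope.

Section LinearIdentities.
Variable X : NormedSpace.

Lemma vadd_0r (x : X) : vadd x vzero = x.
Proof. rewrite vadd_comm. apply vadd_0l. Qed.

Lemma vadd_cancel_l (x y z : X) : vadd x y = vadd x z -> y = z.
Proof.
intros H. rewrite <- (vadd_0l _ y), <- (vadd_0l _ z), <- (vadd_oppl _ x).
rewrite <- !vadd_assoc, H. reflexivity.
Qed.

Lemma vscal_0l (x : X) : vscal 0 x = vzero.
Proof.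
apply (vadd_cancel_l (vscal 0 x)).
rewrite vadd_0r, <- vscal_distr_s, Rplus_0_r. reflexivity.
Qed.

Lemma vscal_0r (a : R) : vscal a (@vzero X) = vzero.
Proof.
apply (vadd_cancel_l (vscal a vzero)).
rewrite vadd_0r, <- vscal_distr_v, vadd_0r. reflexivity.
Qed.

Lemma vopp_vscal (x : X) : vopp x = vscal (-1) x.
Proof.
apply (vadd_cancel_l x).
rewrite vadd_comm, vadd_oppl, <- (vscal_1 _ x) at 1.
rewrite <- vscal_distr_s, Rplus_opp_r, vscal_0l. reflexivity.
Qed.

Lemma vadd_ACA (a b c d : X) : vadd (vadd a b) (vadd c d) = vadd (vadd a c) (vadd b d).
Proof.
rewrite <- !vadd_assoc. f_equal. rewrite !vadd_assoc. f_equal. apply vadd_comm.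
Qed.

(* Reflexive normalisation: both sides of a vector identity are reified over
   a common list of atoms and compared coefficientwise; the coefficient
   equalities are left as goals in [R]. *)
Inductive vexp := VAtom (n : nat) | VZero | VAdd (a b : vexp) | VOpp (a : vexp) | VScal (r : R) (a : vexp).

Fixpoint veval (env : list X) (e : vexp) : X :=
  match e with
  | VAtom n => nth n env vzero
  | VZero => vzero
  | VAdd a b => vadd (veval env a) (veval env b)
  | VOpp a => vopp (veval env a)
  | VScal r a => vscal r (veval env a)
  end.

Fixpoint coef (e : vexp) (i : nat) : R :=
  match e with
  | VAtom n => if Nat.eqb n i then 1 else 0
  | VZero => 0
  | VAdd a b => coef a i + coef b i
  | VOpp a => - coef a i
  | VScal r a => r * coef a i
  end.

Fixpoint lin_comb (cf : nat -> R) (env : list X) (i : nat) : X :=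
  match env with
  | nil => vzero
  | v :: env' => vadd (vscal (cf i) v) (lin_comb cf env' (S i))
  end.

Lemma lin_comb_ext cf1 cf2 env i :
  (forall j, (i <= j)%nat -> cf1 j = cf2 j) -> lin_comb cf1 env i = lin_comb cf2 env i.
Proof.
revert i; induction env as [|v env IH]; simpl; intros i H; auto.
rewrite (H i (le_n i)), IH; auto. intros j Hj; apply H; lia.
Qed.

Lemma lin_comb_add cf1 cf2 env i :
  lin_comb (fun j => cf1 j + cf2 j) env i = vadd (lin_comb cf1 env i) (lin_comb cf2 env i).
Proof.
revert i; induction env as [|v env IH]; simpl; intros i.
- rewrite vadd_0l. reflexivity.
- rewrite IH, vscal_distr_s. apply vadd_ACA.
Qed.

Lemma lin_comb_scal r cf env i :
  lin_comb (fun j => r * cf j) env i = vscal r (lin_comb cf env i).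
Proof.
revert i; induction env as [|v env IH]; simpl; intros i.
- rewrite vscal_0r. reflexivity.
- rewrite IH, vscal_distr_v, vscal_assoc. reflexivity.
Qed.

Lemma lin_comb_0 env i : lin_comb (fun _ => 0) env i = vzero.
Proof.
revert i; induction env as [|v env IH]; simpl; intros i; auto.
rewrite IH, vscal_0l, vadd_0l. reflexivity.
Qed.

Lemma lin_comb_nth env n i :
  nth n env vzero = lin_comb (fun j => if Nat.eqb (n + i) j then 1 else 0) env i.
Proof.
revert n i; induction env as [|v env IH]; simpl; intros n i.
- destruct n; symmetry; apply (lin_comb_0 nil i).
- destruct n as [|n].
  + rewrite Nat.eqb_refl, vscal_1, (lin_comb_ext _ (fun _ => 0)), lin_comb_0, vadd_0r; auto.
    intros j Hj. simpl. destruct (Nat.eqb_spec i j); auto; lia.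
  + rewrite (IH n (S i)).
    replace (Nat.eqb (S n + i) i) with false by (symmetry; apply Nat.eqb_neq; lia).
    rewrite vscal_0l, vadd_0l. apply lin_comb_ext; intros j _.
    replace (n + S i)%nat with (S n + i)%nat by lia. reflexivity.
Qed.

Lemma veval_lin_comb env e : veval env e = lin_comb (coef e) env 0.
Proof.
induction e as [n| |a IHa b IHb|a IHa|r a IHa]; simpl.
- rewrite (lin_comb_nth env n 0). apply lin_comb_ext. intros j _. rewrite Nat.add_0_r. reflexivity.
- symmetry; apply lin_comb_0.
- rewrite IHa, IHb, <- lin_comb_add. reflexivity.
- rewrite IHa, vopp_vscal, <- lin_comb_scal. apply lin_comb_ext; intros; ring.
- rewrite IHa, <- lin_comb_scal. reflexivity.
Qed.

Fixpoint coef_eqs (e1 e2 : vexp) (env : list X) (i : nat) : Prop :=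
  match env with
  | nil => True
  | _ :: env' => coef e1 i = coef e2 i /\ coef_eqs e1 e2 env' (S i)
  end.

Lemma veval_eq env e1 e2 : coef_eqs e1 e2 env 0 -> veval env e1 = veval env e2.
Proof.
rewrite !veval_lin_comb. generalize 0%nat.
induction env as [|v env IH]; simpl; intros i H; auto.
destruct H as [H1 H2]. rewrite H1, (IH (S i) H2). reflexivity.
Qed.

End LinearIdentities.

Ltac vlookup x l :=
  match l with
  | x :: _ => constr:(O)
  | _ :: ?l' => let n := vlookup x l' in constr:(S n)
  end.

Ltac vatoms t acc :=
  match t with
  | vadd ?a ?b => let acc1 := vatoms a acc in vatoms b acc1
  | vopp ?a => vatoms a acc
  | vscal _ ?a => vatoms a acc
  | vzero => acc
  | _ => match acc with
         | context [t] => acc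
         | _ => constr:(app acc (t :: nil))
         end
  end.

Ltac vreify t env :=
  match t with
  | vadd ?a ?b => let ea := vreify a env in let eb := vreify b env in constr:(VAdd ea eb)
  | vopp ?a => let ea := vreify a env in constr:(VOpp ea)
  | vscal ?r ?a => let ea := vreify a env in constr:(VScal r ea)
  | vzero => constr:(VZero)
  | _ => let n := vlookup t env in constr:(VAtom n)
  end.

Ltac vcoefs :=
  unfold vdist;
  match goal with
  |- @eq (car ?Xs) ?l ?r =>
    let env1 := vatoms l (@nil (car Xs)) in
    let env2 := vatoms r env1 in
    let env := eval simpl app in env2 in
    let el := vreify l env in
    let er := vreify r env in
    change (veval Xs env el = veval Xs env er);
    apply veval_eq; cbv beta iota delta [coef_eqs coef Nat.eqb]
  end.

Ltac vring := vcoefs; repeat split; try ring.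

Section Norms.
Variable X : NormedSpace.

Lemma vnorm_0 : vnorm (@vzero X) = 0.
Proof. rewrite <- (vscal_0l X vzero), vnorm_scal, Rabs_R0. ring. Qed.

Lemma vnorm_opp (x : X) : vnorm (vopp x) = vnorm x.
Proof. rewrite vopp_vscal, vnorm_scal, Rabs_left by lra. ring. Qed.

Lemma vnorm_ge0 (x : X) : 0 <= vnorm x.
Proof.
assert (H := vnorm_triangle X x (vopp x)).
rewrite vadd_comm, vadd_oppl, vnorm_0, vnorm_opp in H. lra.
Qed.

Lemma vnorm_scal_ge0 (a : R) (x : X) : 0 <= a -> vnorm (vscal a x) = a * vnorm x.
Proof. intros Ha. rewrite vnorm_scal, Rabs_pos_eq; auto. Qed.

Lemma vnorm_convex (t : R) (x y : X) : 0 <= t <= 1 ->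
  vnorm (vadd (vscal t x) (vscal (1 - t) y)) <= t * vnorm x + (1 - t) * vnorm y.
Proof.
intros Ht. rewrite <- !vnorm_scal_ge0 by lra. apply vnorm_triangle.
Qed.

Lemma vdist_sym (x y : X) : vdist x y = vdist y x.
Proof.
unfold vdist. rewrite <- vnorm_opp. f_equal. vring.
Qed.

Lemma vdist_triangle (x y z : X) : vdist x z <= vdist x y + vdist y z.
Proof.
unfold vdist. replace (vadd x (vopp z)) with (vadd (vadd x (vopp y)) (vadd y (vopp z))) by vring.
apply vnorm_triangle.
Qed.

Lemma vdist_xx (x : X) : vdist x x = 0.
Proof. unfold vdist. rewrite vadd_comm, vadd_oppl. apply vnorm_0. Qed.

Lemma vdist_le_norm (x y : X) : vdist x y <= vnorm x + vnorm y.
Proof. unfold vdist. rewrite <- (vnorm_opp y). apply vnorm_triangle. Qed.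

End Norms.

Definition linear_functional {X : NormedSpace} (f : X -> R) : Prop :=
  (forall x y, f (vadd x y) = f x + f y) /\ (forall a x, f (vscal a x) = a * f x).

Section LinearFunctionals.
Variable X : NormedSpace.
Variable f : X -> R.
Hypothesis f_lin : linear_functional f.

Lemma linear_opp (x : X) : f (vopp x) = - f x.
Proof. rewrite vopp_vscal, (proj2 f_lin). ring. Qed.

Lemma linear_sub (x y : X) : f (vadd x (vopp y)) = f x - f y.
Proof. rewrite (proj1 f_lin), linear_opp. ring. Qed.

Lemma linear_convex (t : R) (x y : X) :
  f (vadd (vscal t x) (vscal (1 - t) y)) = t * f x + (1 - t) * f y.
Proof. rewrite (proj1 f_lin), !(proj2 f_lin). reflexivity. Qed.

Lemma dual_unit_ball_of_le : (forall x, f x <= vnorm x) -> dual_unit_ball f.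
Proof.
intros Hle. split; [apply f_lin|split; [apply f_lin|]].
intros x. apply Rabs_le. assert (H := Hle (vopp x)).
rewrite linear_opp, vnorm_opp in H. split; [lra|apply Hle].
Qed.

End LinearFunctionals.

Lemma dual_unit_ball_linear {X : NormedSpace} (f : X -> R) :
  dual_unit_ball f -> linear_functional f.
Proof. intros [H1 [H2 _]]. split; assumption. Qed.

Lemma dual_unit_ball_lipschitz {X : NormedSpace} (f : X -> R) (x y : X) :
  dual_unit_ball f -> f x - f y <= vdist x y.
Proof.
intros Hf. rewrite <- (linear_sub X f (dual_unit_ball_linear f Hf)).
destruct Hf as [_ [_ Hb]]. eapply Rle_trans; [apply Rle_abs|apply Hb].
Qed.

Lemma Zorn_union_closed (T : Type) (P : (T -> Prop) -> Prop) :
  (forall F : (T -> Prop) -> Prop, (forall G, F G -> P G) ->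
     (forall G1 G2, F G1 -> F G2 -> (forall t, G1 t -> G2 t) \/ (forall t, G2 t -> G1 t)) ->
     P (fun t => exists2 G, F G & G t)) ->
  exists A, P A /\ forall B, P B -> (forall t, A t -> B t) -> forall t, B t -> A t.
Proof.
intros H. destruct (@classical_sets.Zorn_bigcup T P H) as [A [PA HA]].
exists A. split; [exact PA|]. intros B PB AB t Bt. apply NNPP. intros nAt.
apply (HA B); [split; [exact AB|]|exact PB]. intros Sub. apply nAt, Sub, Bt.
Qed.

Section HahnBanach.
Variable X : NormedSpace.
Variable p : X -> R.
Hypothesis p_subadd : forall x y, p (vadd x y) <= p x + p y.
Hypothesis p_homog : forall l x, 0 < l -> p (vscal l x) = l * p x.

Lemma sublinear_0 : p vzero = 0.
Proof. assert (H := p_homog 2 vzero ltac:(lra)). rewrite vscal_0r in H. lra. Qed.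

(* Graphs of linear functionals on subspaces that are dominated by [p]. *)
Record dominated_graph (G : X * R -> Prop) : Prop := {
  dg_add : forall x y a b, G (x, a) -> G (y, b) -> G (vadd x y, a + b);
  dg_scal : forall l x a, G (x, a) -> G (vscal l x, l * a);
  dg_zero : forall a, G (vzero, a) -> a = 0;
  dg_le : forall x a, G (x, a) -> a <= p x }.

Lemma dominated_graph_functional G x a b :
  dominated_graph G -> G (x, a) -> G (x, b) -> a = b.
Proof.
intros HG Ha Hb. assert (H := dg_add G HG _ _ _ _ Ha (dg_scal G HG (-1) _ _ Hb)).
replace (vadd x (vscal (-1) x)) with (@vzero X) in H by vring.
apply (dg_zero G HG) in H. lra.
Qed.

Lemma dominated_graph_chain (F : (X * R -> Prop) -> Prop) :
  (forall G, F G -> dominated_graph G) ->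
  (forall G1 G2, F G1 -> F G2 -> (forall q, G1 q -> G2 q) \/ (forall q, G2 q -> G1 q)) ->
  dominated_graph (fun q => exists2 G, F G & G q).
Proof.
intros HF Htot. split.
- intros x y a b [G1 F1 H1] [G2 F2 H2].
  destruct (Htot G1 G2 F1 F2) as [S|S].
  + exists G2; auto. apply (dg_add G2 (HF G2 F2)); auto.
  + exists G1; auto. apply (dg_add G1 (HF G1 F1)); auto.
- intros l x a [G FG HG]. exists G; auto. apply (dg_scal G (HF G FG)); auto.
- intros a [G FG HG]. apply (dg_zero G (HF G FG)); auto.
- intros x a [G FG HG]. apply (dg_le G (HF G FG)); auto.
Qed.

Lemma dominated_graph_origin G :
  dominated_graph G -> dominated_graph (fun q => G q \/ q = (vzero, 0)).
Proof.
intros HG. split.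
- intros x y a b [Ha|Ha] [Hb|Hb]; try (injection Ha as -> ->); try (injection Hb as -> ->).
  + left. apply (dg_add G HG); auto.
  + left. rewrite vadd_0r, Rplus_0_r. auto.
  + left. rewrite vadd_0l, Rplus_0_l. auto.
  + right. rewrite vadd_0l, Rplus_0_l. auto.
- intros l x a [Ha|Ha].
  + left. apply (dg_scal G HG); auto.
  + injection Ha as -> ->. right. rewrite vscal_0r, Rmult_0_r. auto.
- intros a [Ha|Ha]; [apply (dg_zero G HG); auto|injection Ha as ->; auto].
- intros x a [Ha|Ha]; [apply (dg_le G HG); auto|injection Ha as -> ->].
  rewrite sublinear_0. lra.
Qed.

Lemma dominated_graph_bracket G x : dominated_graph G -> G (vzero, 0) ->
  exists c, (forall y b, G (y, b) -> b - p (vadd y (vopp x)) <= c) /\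
            (forall z b, G (z, b) -> c <= p (vadd z x) - b).
Proof.
intros HG G00.
assert (Hsep : forall y b z b', G (y, b) -> G (z, b') ->
                 b - p (vadd y (vopp x)) <= p (vadd z x) - b').
{ intros y b z b' Hy Hz.
  assert (H := dg_le G HG _ _ (dg_add G HG _ _ _ _ Hy Hz)).
  assert (T := p_subadd (vadd y (vopp x)) (vadd z x)).
  replace (vadd (vadd y (vopp x)) (vadd z x)) with (vadd y z) in T by vring.
  lra. }
destruct (completeness (fun r => exists y b, G (y, b) /\ r = b - p (vadd y (vopp x))))
  as [c [Hc_ub Hc_lub]].
- exists (p (vadd vzero x) - 0). intros r [y [b [Hy ->]]]. apply Hsep; auto.
- exists (0 - p (vadd vzero (vopp x))), vzero, 0. auto.
- exists c. split.
  + intros y b Hy. apply Hc_ub. exists y, b. auto.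
  + intros z b Hz. apply Hc_lub. intros r [y [b' [Hy ->]]]. apply Hsep; auto.
Qed.

Lemma dominated_graph_bracket_le G x c :
  dominated_graph G ->
  (forall y b, G (y, b) -> b - p (vadd y (vopp x)) <= c) ->
  (forall z b, G (z, b) -> c <= p (vadd z x) - b) ->
  forall y b s, G (y, b) -> b + s * c <= p (vadd y (vscal s x)).
Proof.
intros HG c_lo c_up y b s Hy.
destruct (Rtotal_order s 0) as [Hs|[->|Hs]].
- set (m := - s).
  assert (Hm : 0 < m) by (unfold m; lra).
  assert (H := c_lo _ _ (dg_scal G HG (/ m) _ _ Hy)).
  replace (vadd y (vscal s x)) with (vscal m (vadd (vscal (/ m) y) (vopp x)))
    by (vcoefs; repeat split; unfold m; field; lra).
  rewrite p_homog by exact Hm.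
  apply (Rmult_le_compat_l m) in H; [|lra].
  replace (m * (/ m * b - p (vadd (vscal (/ m) y) (vopp x))))
    with (b - m * p (vadd (vscal (/ m) y) (vopp x))) in H by (field; lra).
  unfold m in *. lra.
- rewrite vscal_0l, vadd_0r, Rmult_0_l, Rplus_0_r. apply (dg_le G HG); auto.
- assert (H := c_up _ _ (dg_scal G HG (/ s) _ _ Hy)).
  replace (vadd y (vscal s x)) with (vscal s (vadd (vscal (/ s) y) x))
    by (vcoefs; repeat split; field; lra).
  rewrite p_homog by exact Hs.
  apply (Rmult_le_compat_l s) in H; [|lra].
  replace (s * (p (vadd (vscal (/ s) y) x) - / s * b))
    with (s * p (vadd (vscal (/ s) y) x) - b) in H by (field; lra).
  lra.
Qed.

Lemma dominated_graph_extend G x :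
  dominated_graph G -> G (vzero, 0) -> ~ (exists a, G (x, a)) ->
  exists c, dominated_graph (fun q => exists y b s, G (y, b) /\ q = (vadd y (vscal s x), b + s * c)).
Proof.
intros HG G00 Nx.
destruct (dominated_graph_bracket G x HG G00) as [c [c_lo c_up]].
exists c. split.
- intros x1 x2 a1 a2 [y1 [b1 [s1 [H1 E1]]]] [y2 [b2 [s2 [H2 E2]]]].
  injection E1 as -> ->. injection E2 as -> ->.
  exists (vadd y1 y2), (b1 + b2), (s1 + s2). split.
  + apply (dg_add G HG); auto.
  + f_equal; [vring|ring].
- intros l x1 a1 [y [b [s [Hy E]]]]. injection E as -> ->.
  exists (vscal l y), (l * b), (l * s). split.
  + apply (dg_scal G HG); auto.
  + f_equal; [vring|ring].
- intros a [y [b [s [Hy E]]]]. injection E as E1 ->.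
  destruct (Req_dec s 0) as [->|Hs].
  + rewrite vscal_0l, vadd_0r in E1. subst y. rewrite (dg_zero G HG b Hy). ring.
  + exfalso. apply Nx. exists ((-1 / s) * b).
    assert (Ex : x = vscal (-1 / s) y).
    { transitivity (vadd (vscal (1 / s) (vadd y (vscal s x))) (vscal (-1 / s) y)).
      - vcoefs; repeat split; field; auto.
      - rewrite <- E1, vscal_0r, vadd_0l. reflexivity. }
    rewrite Ex. apply (dg_scal G HG); auto.
- intros x1 a1 [y [b [s [Hy E]]]]. injection E as -> ->.
  apply (dominated_graph_bracket_le G x c HG c_lo c_up); auto.
Qed.

Theorem hahn_banach : exists f : X -> R, linear_functional f /\ forall x, f x <= p x.
Proof.
destruct (Zorn_union_closed (X * R) dominated_graph dominated_graph_chain) as [A [HA Amax]].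
assert (A00 : A (vzero, 0)).
{ apply (Amax _ (dominated_graph_origin A HA)); auto. }
assert (Atotal : forall x, exists a, A (x, a)).
{ intros x. apply NNPP. intros Nx.
  destruct (dominated_graph_extend A x HA A00 Nx) as [c Hc].
  apply Nx. exists c. apply (Amax _ Hc).
  - intros [y b] Hy. exists y, b, 0. split; auto. f_equal; [vring|ring].
  - exists vzero, 0, 1. split; auto. f_equal; [vring|ring]. }
destruct (choice (fun x a => A (x, a)) Atotal) as [f Hf].
exists f. split; [split|].
- intros x y. apply (dominated_graph_functional A (vadd x y)); auto.
  apply (dg_add A HA); auto.
- intros a x. apply (dominated_graph_functional A (vscal a x)); auto.
  apply (dg_scal A HA); auto.
- intros x. apply (dg_le A HA); auto.
Qed.

End HahnBanach.

Lemma is_glb_unique (E : R -> Prop) (m n : R) : is_glb E m -> is_glb E n -> m = n.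
Proof. intros [Hm1 Hm2] [Hn1 Hn2]. apply Rle_antisym; auto. Qed.

Lemma is_glb_exists (E : R -> Prop) :
  (exists b, forall y, E y -> b <= y) -> (exists y, E y) -> exists m, is_glb E m.
Proof.
intros [b Hb] [y Hy].
destruct (completeness (fun z => E (- z))) as [s [Hs1 Hs2]].
- exists (- b). intros z Hz. specialize (Hb _ Hz). lra.
- exists (- y). rewrite Ropp_involutive. exact Hy.
- exists (- s). split.
  + intros z Hz. assert (H : - z <= s) by (apply Hs1; cbv beta; rewrite Ropp_involutive; exact Hz).
    lra.
  + intros c Hc. assert (H : s <= - c).
    { apply Hs2. intros z Hz. specialize (Hc _ Hz). lra. }
    lra.
Qed.

Lemma is_glb_add_ge (E F : R -> Prop) (m n c : R) : is_glb E m -> is_glb F n ->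
  (forall a b, E a -> F b -> c <= a + b) -> c <= m + n.
Proof.
intros [_ Hm] [_ Hn] H.
assert (c - n <= m); [|lra].
apply Hm. intros a Ha. assert (c - a <= n); [|lra].
apply Hn. intros b Hb. specialize (H a b Ha Hb). lra.
Qed.

Lemma is_glb_scale (E F : R -> Prop) (l m : R) : 0 < l ->
  (forall y, F y <-> E (/ l * y)) -> is_glb E m -> is_glb F (l * m).
Proof.
intros Hl HF [Hm1 Hm2]. split.
- intros y Hy. apply HF, Hm1 in Hy.
  apply (Rmult_le_compat_l l) in Hy; [|lra]. rewrite <- Rmult_assoc, Rinv_r, Rmult_1_l in Hy; lra.
- intros b Hb. assert (H : / l * b <= m).
  { apply Hm2. intros z Hz. assert (Fz : F (l * z)).
    { apply HF. rewrite <- Rmult_assoc, Rinv_l, Rmult_1_l by lra. exact Hz. }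
    specialize (Hb _ Fz).
    apply (Rmult_le_compat_l (/ l)) in Hb; [|left; apply Rinv_0_lt_compat; lra].
    rewrite <- Rmult_assoc, Rinv_l, Rmult_1_l in Hb; lra. }
  apply (Rmult_le_compat_l l) in H; [|lra]. rewrite <- Rmult_assoc, Rinv_r, Rmult_1_l in H; lra.
Qed.

Section Separation.
Variable X : NormedSpace.
Variables (K : X -> Prop) (x0 w0 : X) (r : R).
Hypotheses (HK : ns_convex K) (Hw0 : K w0) (Hr : forall w, K w -> r <= vdist x0 w).

Lemma cone_combination t1 t2 w1 w2 : 0 <= t1 -> 0 <= t2 -> K w1 -> K w2 ->
  exists w, K w /\ vadd (vscal t1 (vadd x0 (vopp w1))) (vscal t2 (vadd x0 (vopp w2)))
                   = vscal (t1 + t2) (vadd x0 (vopp w)).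
Proof.
intros H1 H2 Hw1 Hw2.
destruct (Req_dec (t1 + t2) 0) as [E|E].
- exists w1. split; auto. assert (t1 = 0) by lra. assert (t2 = 0) by lra. subst. vring.
- exists (vadd (vscal (t1 / (t1 + t2)) w1) (vscal (1 - t1 / (t1 + t2)) w2)). split.
  + apply HK; auto. split.
    * apply Rmult_le_pos; [lra|left; apply Rinv_0_lt_compat; lra].
    * apply (Rmult_le_reg_r (t1 + t2)); [lra|]. field_simplify; lra.
  + vcoefs; repeat split; field; auto.
Qed.

(* [gauge x] is the infimum of [|x + t (x0 - w)| - t r] over [t >= 0] and [w]
   in [K]; a functional below it is bounded by the norm ([t = 0]) and by [- r]
   at every [w - x0] ([t = 1]). *)
Definition gauge_set (x : X) (y : R) : Prop :=
  exists t w, 0 <= t /\ K w /\ y = vnorm (vadd x (vscal t (vadd x0 (vopp w)))) - t * r.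

Lemma gauge_set_ge x y : gauge_set x y -> - vnorm x <= y.
Proof.
intros [t [w [Ht [Hw ->]]]].
assert (H1 := vnorm_triangle X (vadd x (vscal t (vadd x0 (vopp w)))) (vopp x)).
replace (vadd (vadd x (vscal t (vadd x0 (vopp w)))) (vopp x))
  with (vscal t (vadd x0 (vopp w))) in H1 by vring.
rewrite vnorm_scal_ge0, vnorm_opp in H1 by exact Ht.
assert (H2 : t * r <= t * vdist x0 w) by (apply Rmult_le_compat_l; auto).
unfold vdist in H2. lra.
Qed.

Lemma gauge_exists x : exists m, is_glb (gauge_set x) m.
Proof.
apply is_glb_exists.
- exists (- vnorm x). apply gauge_set_ge.
- exists (vnorm (vadd x (vscal 0 (vadd x0 (vopp w0)))) - 0 * r). exists 0, w0. auto with real.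
Qed.

Definition gauge (x : X) : R := proj1_sig (constructive_indefinite_description _ (gauge_exists x)).

Lemma gauge_glb x : is_glb (gauge_set x) (gauge x).
Proof. unfold gauge. destruct (constructive_indefinite_description _ _). assumption. Qed.

Lemma gauge_le x y : gauge_set x y -> gauge x <= y.
Proof. apply (gauge_glb x). Qed.

Lemma gauge_subadd x y : gauge (vadd x y) <= gauge x + gauge y.
Proof.
apply (is_glb_add_ge _ _ _ _ _ (gauge_glb x) (gauge_glb y)).
intros a b [t1 [w1 [Ht1 [Hw1 ->]]]] [t2 [w2 [Ht2 [Hw2 ->]]]].
destruct (cone_combination t1 t2 w1 w2 Ht1 Ht2 Hw1 Hw2) as [w [Hw Ew]].
eapply Rle_trans.
- apply gauge_le. exists (t1 + t2), w. split; [lra|split; [exact Hw|reflexivity]].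
- rewrite <- Ew.
  replace (vadd (vadd x y) (vadd (vscal t1 (vadd x0 (vopp w1))) (vscal t2 (vadd x0 (vopp w2)))))
    with (vadd (vadd x (vscal t1 (vadd x0 (vopp w1)))) (vadd y (vscal t2 (vadd x0 (vopp w2)))))
    by vring.
  assert (H := vnorm_triangle X (vadd x (vscal t1 (vadd x0 (vopp w1))))
                                (vadd y (vscal t2 (vadd x0 (vopp w2))))).
  lra.
Qed.

Lemma gauge_set_scale l x y : 0 < l -> gauge_set (vscal l x) y <-> gauge_set x (/ l * y).
Proof.
intros Hl.
assert (E : forall t w, vadd (vscal l x) (vscal t (vadd x0 (vopp w)))
                        = vscal l (vadd x (vscal (/ l * t) (vadd x0 (vopp w))))).
{ intros t w. vcoefs; repeat split; field; lra. }
split.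
- intros [t [w [Ht [Hw ->]]]]. exists (/ l * t), w. split.
  + apply Rmult_le_pos; [left; apply Rinv_0_lt_compat|]; lra.
  + split; [exact Hw|]. rewrite E, vnorm_scal_ge0 by lra. field. lra.
- intros [t [w [Ht [Hw Hy]]]]. exists (l * t), w. split; [apply Rmult_le_pos; lra|].
  split; [exact Hw|]. rewrite E, vnorm_scal_ge0 by lra.
  replace (/ l * (l * t)) with t by (field; lra).
  replace y with (l * (/ l * y)) by (field; lra). rewrite Hy. ring.
Qed.

Lemma gauge_homog l x : 0 < l -> gauge (vscal l x) = l * gauge x.
Proof.
intros Hl. apply (is_glb_unique (gauge_set (vscal l x))); [apply gauge_glb|].
apply (is_glb_scale (gauge_set x)); auto using gauge_glb, gauge_set_scale.
Qed.

End Separation.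

Lemma separating_functional (X : NormedSpace) (K : X -> Prop) (x0 : X) (r : R) :
  ns_convex K -> (forall w, K w -> r <= vdist x0 w) ->
  exists f, dual_unit_ball f /\ forall a, K a -> f a + r <= f x0.
Proof.
intros HK Hr.
destruct (classic (exists w, K w)) as [[w0 Hw0]|NK].
- destruct (hahn_banach X (gauge X K x0 w0 r Hw0 Hr)) as [f [Hf Hfp]].
  + exact (gauge_subadd X K x0 w0 r HK Hw0 Hr).
  + apply gauge_homog.
  + exists f. split.
    * apply (dual_unit_ball_of_le X f Hf). intros x. eapply Rle_trans; [apply Hfp|].
      apply gauge_le. exists 0, w0. split; [lra|split; [exact Hw0|]].
      rewrite vscal_0l, vadd_0r. ring.
    * intros a Ha. assert (H : f (vadd a (vopp x0)) <= - r).
      { eapply Rle_trans; [apply Hfp|]. apply gauge_le. exists 1, a.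
        split; [lra|split; [exact Ha|]].
        replace (vadd (vadd a (vopp x0)) (vscal 1 (vadd x0 (vopp a)))) with (@vzero X) by vring.
        rewrite vnorm_0. ring. }
      rewrite (linear_sub X f Hf) in H. lra.
- exists (fun _ => 0). split.
  + apply dual_unit_ball_of_le; [split; intros; ring|]. intros x. apply vnorm_ge0.
  + intros a Ha. exfalso. apply NK. eauto.
Qed.

Section ClosedConvexHull.
Variable X : NormedSpace.

Lemma hull_min (E K : X -> Prop) : ns_closed K -> ns_convex K -> ns_subset E K ->
  ns_subset (closed_convex_hull E) K.
Proof. intros H1 H2 H3 x H. apply H; auto. Qed.

Lemma subset_hull (E : X -> Prop) : ns_subset E (closed_convex_hull E).
Proof. intros x Hx K _ _ HK. apply HK, Hx. Qed.

Lemma hull_mono (E E' : X -> Prop) : ns_subset E E' ->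
  ns_subset (closed_convex_hull E) (closed_convex_hull E').
Proof. intros H x Hx K H1 H2 H3. apply Hx; auto. intros y Hy. apply H3, H, Hy. Qed.

Lemma hull_convex (E : X -> Prop) : ns_convex (closed_convex_hull E).
Proof. intros x y t Hx Hy Ht K H1 H2 H3. apply H2; auto; [apply Hx|apply Hy]; auto. Qed.

Lemma hull_closed (E : X -> Prop) : ns_closed (closed_convex_hull E).
Proof.
intros x Hx. apply not_all_ex_not in Hx as [K HK].
assert (H : ns_closed K /\ ns_convex K /\ ns_subset E K /\ ~ K x).
{ repeat split; apply NNPP; intro N; apply HK; intros; tauto. }
destruct H as [Kc [Kv [KE Kx]]].
destruct (Kc x Kx) as [r [Hr Hb]]. exists r. split; auto.
intros y Hy Hh. apply (Hb y Hy), Hh; auto.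
Qed.

Lemma closed_ball_closed (c : X) (e : R) : ns_closed (fun z => vdist z c <= e).
Proof.
intros x Hx. exists (vdist x c - e). split; [lra|].
intros y Hy Hc. assert (T := vdist_triangle X x y c). lra.
Qed.

Lemma closed_ball_convex (c : X) (e : R) : ns_convex (fun z => vdist z c <= e).
Proof.
intros x y t Hx Hy Ht. unfold vdist in *.
replace (vadd (vadd (vscal t x) (vscal (1 - t) y)) (vopp c))
  with (vadd (vscal t (vadd x (vopp c))) (vscal (1 - t) (vadd y (vopp c)))) by vring.
eapply Rle_trans; [apply vnorm_convex; exact Ht|].
assert (t * vnorm (vadd x (vopp c)) <= t * e) by (apply Rmult_le_compat_l; lra).
assert ((1 - t) * vnorm (vadd y (vopp c)) <= (1 - t) * e) by (apply Rmult_le_compat_l; lra).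
lra.
Qed.

Lemma hull_diam_le (E : X -> Prop) (e : R) : diam_le E e -> diam_le (closed_convex_hull E) e.
Proof.
intros H.
assert (Hpt : forall y z, E y -> closed_convex_hull E z -> vdist z y <= e).
{ intros y z Hy Hz. apply (hull_min E (fun z => vdist z y <= e)); auto.
  - apply closed_ball_closed.
  - apply closed_ball_convex.
  - intros w Hw. apply H; auto. }
intros z1 z2 H1 H2.
apply (hull_min E (fun w => vdist w z2 <= e)); auto.
- apply closed_ball_closed.
- apply closed_ball_convex.
- intros w Hw. rewrite vdist_sym. apply Hpt; auto.
Qed.

End ClosedConvexHull.

(* The bound defining [near_piece] holds on [A] and on [K] and cuts out a
   closed convex set, hence it holds on the whole hull. *)
Section HullNearPiece.
Variable X : NormedSpace.
Variables (A K : X -> Prop) (f : X -> R) (c M : R).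
Hypotheses (HK : ns_convex K) (Hf : dual_unit_ball f) (Hc : 0 <= c)
  (HKM : forall k, K k -> f k <= M)
  (HA : forall a, A a -> exists k, K k /\ vdist a k <= c * (M - f a)).

Definition near_piece (z : X) : Prop :=
  forall eta, 0 < eta -> exists k, K k /\ vdist z k <= c * (M - f z) + eta.

Lemma near_piece_closed : ns_closed near_piece.
Proof.
intros z Nz. apply not_all_ex_not in Nz as [eta Nz].
apply imply_to_and in Nz as [Heta Nz].
assert (Far : forall k, K k -> c * (M - f z) + eta < vdist z k).
{ intros k Kk. apply Rnot_le_lt. intros Hle. apply Nz. exists k. auto. }
exists (eta / (2 * (c + 1))). split; [apply Rdiv_lt_0_compat; lra|].
intros y Hy Ny. destruct (Ny (eta / 2) ltac:(lra)) as [k [Kk Hk]].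
assert (H1 := Far k Kk). assert (H2 := vdist_triangle X z y k).
assert (H3 := dual_unit_ball_lipschitz f z y Hf).
assert (H4 : c * (f z - f y) <= c * vdist z y) by (apply Rmult_le_compat_l; lra).
assert (H5 : (c + 1) * vdist z y <= eta / 2).
{ assert (Hy' : (c + 1) * vdist z y <= (c + 1) * (eta / (2 * (c + 1))))
    by (apply Rmult_le_compat_l; lra).
  replace ((c + 1) * (eta / (2 * (c + 1)))) with (eta / 2) in Hy' by (field; lra). lra. }
lra.
Qed.

Lemma near_piece_convex : ns_convex near_piece.
Proof.
intros z1 z2 t N1 N2 Ht eta Heta.
destruct (N1 eta Heta) as [k1 [K1 H1]]. destruct (N2 eta Heta) as [k2 [K2 H2]].
exists (vadd (vscal t k1) (vscal (1 - t) k2)). split; [apply HK; auto|].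
unfold vdist in *.
replace (vadd (vadd (vscal t z1) (vscal (1 - t) z2)) (vopp (vadd (vscal t k1) (vscal (1 - t) k2))))
  with (vadd (vscal t (vadd z1 (vopp k1))) (vscal (1 - t) (vadd z2 (vopp k2)))) by vring.
eapply Rle_trans; [apply vnorm_convex; exact Ht|].
rewrite (linear_convex X f (dual_unit_ball_linear f Hf)).
apply (Rmult_le_compat_l t) in H1; [|lra].
apply (Rmult_le_compat_l (1 - t)) in H2; [|lra].
lra.
Qed.

Lemma hull_near_piece : ns_subset (closed_convex_hull (ns_union A K)) near_piece.
Proof.
apply hull_min; [apply near_piece_closed|apply near_piece_convex|].
intros z [Az|Kz] eta Heta.
- destruct (HA z Az) as [k [Kk Hk]]. exists k. split; [exact Kk|lra].
- exists z. split; [exact Kz|]. rewrite vdist_xx.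
  assert (0 <= c * (M - f z)) by (apply Rmult_le_pos; [|specialize (HKM z Kz)]; lra). lra.
Qed.

End HullNearPiece.

(* A functional separating a point of [C \ A] from [A] keeps [A] at least [r]
   below the supremum on [C], so with [c = 2 M0 / r] the hypothesis of
   [hull_near_piece] holds on [A] with any point of [K]. *)
Lemma outside_point_near_piece (X : NormedSpace) (C A K : X -> Prop) (x0 : X) :
  ns_bounded C -> ns_closed A -> ns_convex A -> ns_subset A C ->
  ns_convex K -> ns_subset K C -> (exists k, K k) ->
  ns_subset C (closed_convex_hull (ns_union A K)) -> C x0 -> ~ A x0 ->
  exists f c, dual_unit_ball f /\ 0 <= c /\
    forall M, (forall b, C b -> f b <= M) -> ns_subset C (near_piece X K f c M).
Proof.
intros [M0 HM0] HAc HAv HAC HKv HKC [k0 Kk0] Hh Cx0 nA.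
destruct (HAc x0 nA) as [r [Hr Hrb]].
assert (Hdist : forall w, A w -> r <= vdist x0 w).
{ intros w Hw. apply Rnot_lt_le. intros Hl. apply (Hrb w Hl Hw). }
destruct (separating_functional X A x0 r HAv Hdist) as [f [Hf Hsep]].
assert (M0_ge0 : 0 <= M0) by (eapply Rle_trans; [apply vnorm_ge0|apply (HM0 x0 Cx0)]).
set (c := 2 * M0 / r).
assert (Hc : 0 <= c) by (unfold c; apply Rmult_le_pos; [lra|left; apply Rinv_0_lt_compat; lra]).
exists f, c. split; [exact Hf|split; [exact Hc|]].
intros M fM z Cz. apply (hull_near_piece X A K f c M HKv Hf Hc); [| |apply Hh, Cz].
- intros k Kk. apply fM, HKC, Kk.
- intros a Aa. exists k0. split; [exact Kk0|].
  assert (vdist a k0 <= 2 * M0)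
    by (pose proof (vdist_le_norm X a k0); pose proof (HM0 a (HAC a Aa));
        pose proof (HM0 k0 (HKC k0 Kk0)); lra).
  assert (c * r <= c * (M - f a))
    by (apply Rmult_le_compat_l; [exact Hc|specialize (Hsep a Aa); specialize (fM x0 Cx0); lra]).
  replace (c * r) with (2 * M0) in * by (unfold c; field; lra). lra.
Qed.

(* A slice of [C] of width [delta] lies within [c * delta] of [K], so its
   diameter is at most about [e < eps]. *)
Lemma non_dentable_hull_small_piece (X : NormedSpace) (eps e : R) (C A K : X -> Prop) :
  non_dentable C eps -> ns_closed A -> ns_convex A -> ns_subset A C ->
  ns_convex K -> ns_subset K C -> diam_le K e -> e < eps ->
  ns_subset C (closed_convex_hull (ns_union A K)) -> ns_subset C A.
Proof.
intros [HCb HCnd] HAc HAv HAC HKv HKC HKd He Hh x0 Cx0.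
apply NNPP. intros nA.
destruct (classic (exists k, K k)) as [HK0|NK].
2:{ apply nA, (hull_min X (ns_union A K) A); auto.
    intros y [Hy|Hy]; [exact Hy|exfalso; apply NK; eauto]. }
destruct (outside_point_near_piece X C A K x0 HCb HAc HAv HAC HKv HKC HK0 Hh Cx0 nA)
  as [f [c [Hf [Hc Hnear]]]].
set (delta := (eps - e) / (4 * (c + 1))).
assert (Hdelta : 0 < delta) by (unfold delta; apply Rdiv_lt_0_compat; lra).
assert (Hcdelta : c * delta <= (eps - e) / 4).
{ unfold delta. replace (c * ((eps - e) / (4 * (c + 1)))) with ((eps - e) / 4 * (c / (c + 1)))
    by (field; lra).
  assert (Hc1 : c / (c + 1) <= 1)
    by (apply Rmult_le_reg_r with (c + 1); [lra|field_simplify; lra]).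
  apply Rmult_le_compat_l with (r := (eps - e) / 4) in Hc1; lra. }
destruct (HCnd f delta Hf Hdelta)
  as [z1 [z2 [[C1 [M [HM S1]]] [[C2 [M' [HM' S2]]] Hfar]]]].
rewrite <- (is_lub_u _ _ _ HM HM') in S2.
assert (fM : forall b, C b -> f b <= M) by (intros b Cb; apply (proj1 HM); exists b; auto).
destruct (Hnear M fM z1 C1 ((eps - e) / 8)) as [k1 [K1 H1]]; [lra|].
destruct (Hnear M fM z2 C2 ((eps - e) / 8)) as [k2 [K2 H2]]; [lra|].
assert (c * (M - f z1) <= c * delta) by (apply Rmult_le_compat_l; lra).
assert (c * (M - f z2) <= c * delta) by (apply Rmult_le_compat_l; lra).
pose proof (HKd k1 k2 K1 K2). pose proof (vdist_triangle X z1 k1 z2).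
pose proof (vdist_triangle X k1 k2 z2). rewrite (vdist_sym X k2 z2) in *.
lra.
Qed.

Lemma non_dentable_hull_cover (X : NormedSpace) (eps e : R) (C D : X -> Prop)
    (l : list (X -> Prop)) :
  ns_closed C -> ns_convex C -> non_dentable C eps -> ns_subset D C -> e < eps ->
  (forall S, In S l -> diam_le S e) ->
  forall A, ns_closed A -> ns_convex A -> ns_subset A C ->
  ns_subset C (closed_convex_hull (ns_union A (fun y => D y /\ exists S, In S l /\ S y))) ->
  ns_subset C A.
Proof.
intros HCc HCv HCnd HDC He.
induction l as [|S l IH]; intros Hl A HAc HAv HAC Hh.
- intros x Cx. apply (hull_min X (ns_union A (fun y => D y /\ exists S, In S nil /\ S y)) A);
    [exact HAc|exact HAv| |apply Hh, Cx].
  intros y [Hy|[_ [S [[] _]]]]; exact Hy.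
- set (A' := closed_convex_hull (ns_union A (fun y => D y /\ exists S, In S l /\ S y))).
  assert (Hsub : forall E, ns_subset E C -> ns_subset (closed_convex_hull E) C)
    by (intros E HE; apply hull_min; auto).
  apply (IH (fun S' H => Hl S' (or_intror H)) A HAc HAv HAC).
  apply (non_dentable_hull_small_piece X eps e C A' (closed_convex_hull (fun y => D y /\ S y)));
    [exact HCnd|apply hull_closed|apply hull_convex| |apply hull_convex| | |exact He|].
  + apply Hsub. intros y [Hy|[Dy _]]; auto.
  + apply Hsub. intros y [Dy _]; auto.
  + apply hull_diam_le. intros y z [_ Hy] [_ Hz]. apply (Hl S); simpl; auto.
  + intros x Cx. apply (hull_mono X (ns_union A (fun y => D y /\ exists S', In S' (S :: l) /\ S' y)));
      [|apply Hh, Cx].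
    intros y [Ay|[Dy [S' [[<-|Hin] Sy]]]].
    * left. apply subset_hull. left. exact Ay.
    * right. apply subset_hull. auto.
    * left. apply subset_hull. right. eauto.
Qed.

Lemma kuratowski_lt_cover (X : NormedSpace) (D : X -> Prop) (a eps : R) :
  is_kuratowski D a -> a < eps -> exists e, e < eps /\ finite_cover_diam D e.
Proof.
intros [_ Hglb] Hae. apply NNPP. intros N.
assert (Hb : (a + eps) / 2 <= a).
{ apply Hglb. intros y [_ Hy]. apply Rnot_lt_le. intros Hl. apply N. exists y. split; [lra|exact Hy]. }
lra.
Qed.

Theorem mainTheorem2 (X : NormedSpace) (HX : Banach X) (eps : R) (Heps : 0 < eps)
  (C C' D : X -> Prop)
  (HCcl : ns_closed C) (HCb : ns_bounded C) (HCcv : ns_convex C) (HCnd : non_dentable C eps)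
  (HC'C : ns_subset C' C) (HC'cl : ns_closed C') (HC'cv : ns_convex C')
  (HDC : ns_subset D C) (HDa : exists a, is_kuratowski D a /\ a < eps)
  (Hhull : forall x, C x <-> closed_convex_hull (ns_union C' D) x) :
  forall x, C x <-> C' x.
Proof.
destruct HDa as [a [Ha Hae]].
destruct (kuratowski_lt_cover X D a eps Ha Hae) as [e [Hee [l [Hl Hcov]]]].
intros x. split; [|apply HC'C].
revert x. apply (non_dentable_hull_cover X eps e C D l HCcl HCcv HCnd HDC Hee Hl C'); auto.
intros y Cy. apply Hhull in Cy. revert Cy. apply hull_mono.
intros z [Hz|Hz]; [left; exact Hz|right; split; auto].
Qed.
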